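(* Let $R$ be a commutative ring. Let $0\to P\xrightarrow{f}F\xrightarrow{g}M\to 0$ be a $w$-split exact sequence of $R$-modules, with fixed $J=\langle d_1,\dots,d_n\rangle\in\mathrm{GV}(R)$ and $h_1,\dots,h_n\in\mathrm{Hom}_R(M,F)$ satisfying $gh_k=\eta^M_{d_k}$. Suppose $F=\bigoplus_{i\in I}F_i$ with each $F_i$ a projective submodule. Let $\mathcal S_1$ be a set of subsets of $I$, totally ordered by inclusion, such that $h_k(M(H_s))\subseteq F(H_s)$ for every $H_s\in\mathcal S_1$ and every $k=1,\dots,n$. Put $H=\bigcup_{H_s\in\mathcal S_1}H_s$. Then: (1) $\bigcup_{H_s\in\mathcal S_1}F(H_s)=F(H)$, which is therefore projective. Moreover, $\bigcup_{H_s\in\mathcal S_1}P(H_s)=P(H)$ and $\bigcup_{H_s\in\mathcal S_1}M(H_s)=M(H)$. (2) $h_k(M(H))\subseteq F(H)$ for all $k=1,\dots,n$. Hence the exact sequence $0\to P(H)\xrightarrow{f|_{P(H)}}F(H)\xrightarrow{g|_{F(H)}}M(H)\to 0$ is $w$-split (witnessed by $J$ and the restrictions of the $h_k$).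
   Context: $R$ is a commutative ring with identity. For an $R$-module $X$ and $s\in R$, $\eta^X_s$ is multiplication by $s$. An ideal $J$ is a GV-ideal if $J$ is finitely generated and the natural map $R\to\mathrm{Hom}_R(J,R)$ is an isomorphism; $\mathrm{GV}(R)$ is the set of GV-ideals. A short exact sequence $0\to A\xrightarrow{f}B\xrightarrow{g}C\to 0$ is $w$-split if there exist $J=\langle d_1,\dots,d_n\rangle\in\mathrm{GV}(R)$ and $h_k\in\mathrm{Hom}_R(C,B)$ with $gh_k=\eta^C_{d_k}$ for all $k$. Notation: for $H\subseteq I$ nonempty, $F(H)=\bigoplus_{j\in H}F_j$, $M(H)=g(F(H))$ and $P(H)=f^{-1}(\ker(g|_{F(H)}))$. For $H=\emptyset$, $F(H)=P(H)=M(H)=0$. *)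

From HB Require Import structures.
From mathcomp Require Import all_boot all_order all_algebra.
Set Implicit Arguments. Unset Strict Implicit. Unset Printing Implicit Defensive.
Import GRing.Theory.
Local Open Scope ring_scope.

Section Defs.
Variable R : comPzRingType.

(* Submodules of an R-module V are represented by predicates S : V -> Prop. *)
Definition submodP (V : lmodType R) (S : V -> Prop) : Prop :=
  S 0 /\ (forall x y, S x -> S y -> S (x + y)) /\ (forall a x, S x -> S (a *: x)).

Definition linear_on (V W : lmodType R) (S : V -> Prop) (u : V -> W) : Prop :=
  forall a x y, S x -> S y -> u (a *: x + y) = a *: u x + u y.

Definition projective_sub (V : lmodType R) (S : V -> Prop) : Prop :=
  submodP S /\
  forall (A B : lmodType R) (p : {linear A -> B}) (u : V -> B),
    (forall b, exists a, p a = b) ->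
    linear_on S u ->
    exists v : V -> A, linear_on S v /\ forall x, S x -> p (v x) = u x.

Definition ideal_gen (n : nat) (d : 'I_n -> R) (x : R) : Prop :=
  exists r : 'I_n -> R, x = \sum_(i < n) r i * d i.

(* J = <d_1,...,d_n> is a GV-ideal: J is finitely generated (by construction)
   and the natural map R -> Hom_R(J,R), r |-> (x |-> r x), is bijective. *)
Definition GV_ideal (n : nat) (d : 'I_n -> R) : Prop :=
  (forall r : R, (forall x, ideal_gen d x -> r * x = 0) -> r = 0) /\
  (forall phi : R -> R,
      (forall a x y, ideal_gen d x -> ideal_gen d y ->
                     phi (a * x + y) = a * phi x + phi y) ->
      exists r : R, forall x, ideal_gen d x -> phi x = r * x).

Definition ses_sub (P F M : lmodType R) (A : P -> Prop) (B : F -> Prop)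
    (C : M -> Prop) (f : P -> F) (g : F -> M) : Prop :=
  (submodP A /\ submodP B /\ submodP C) /\
  (linear_on A f /\ linear_on B g) /\
  ((forall x, A x -> B (f x)) /\ (forall y, B y -> C (g y))) /\
  (forall x x', A x -> A x' -> f x = f x' -> x = x') /\
  (forall z, C z -> exists y, B y /\ g y = z) /\
  (forall y, B y -> (g y = 0 <-> exists x, A x /\ f x = y)).

(* The exact sequence is w-split, witnessed by J = <d_1,...,d_n> and the
   h_k in Hom_R(C,B) with g h_k = eta_{d_k}. *)
Definition wsplit_with (P F M : lmodType R) (A : P -> Prop) (B : F -> Prop)
    (C : M -> Prop) (f : P -> F) (g : F -> M)
    (n : nat) (d : 'I_n -> R) (h : 'I_n -> M -> F) : Prop :=
  [/\ ses_sub A B C f g, GV_ideal d &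
      forall k, [/\ linear_on C (h k), (forall z, C z -> B (h k z)) &
                    (forall z, C z -> g (h k z) = d k *: z)]].

(* F(H) = (+)_{j in H} F_j, as the set of finite sums of elements of the F_j,
   j in H (for H empty this is 0). *)
Definition FH (I : eqType) (F : lmodType R) (Fi : I -> F -> Prop)
    (H : I -> Prop) (y : F) : Prop :=
  exists (s : seq I) (x : I -> F),
    (forall i, i \in s -> H i /\ Fi i (x i)) /\ y = \sum_(i <- s) x i.

Definition internal_dsum (I : eqType) (F : lmodType R) (Fi : I -> F -> Prop)
  : Prop :=
  (forall i, submodP (Fi i)) /\
  (forall y, FH Fi (fun _ => True) y) /\
  (forall (s : seq I) (x : I -> F), uniq s ->
      (forall i, i \in s -> Fi i (x i)) ->
      \sum_(i <- s) x i = 0 -> forall i, i \in s -> x i = 0).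

Definition MH (I : eqType) (F M : lmodType R) (Fi : I -> F -> Prop)
    (g : F -> M) (H : I -> Prop) (z : M) : Prop :=
  exists y, FH Fi H y /\ g y = z.

Definition PH (I : eqType) (P F M : lmodType R) (Fi : I -> F -> Prop)
    (f : P -> F) (g : F -> M) (H : I -> Prop) (p : P) : Prop :=
  FH Fi H (f p) /\ g (f p) = 0.

End Defs.

From HB Require Import structures.
From mathcomp Require Import all_boot all_order all_algebra.
From Stdlib Require Classical_Prop ClassicalEpsilon.
Set Implicit Arguments.
Unset Strict Implicit.
Unset Printing Implicit Defensive.
Import GRing.Theory.
Local Open Scope ring_scope.

(* F(H) is a direct sum of projectives, hence projective: lift u on each
   summand F_i and add up the lifts; this is well defined because, by the
   independence of the F_i, two finite representations of the same element
   agree after grouping terms by index.  Since S1 is a chain, every finite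
   subset of H = \bigcup S1 lies in a single H_s, so the finite sums forming
   F(H) already lie in some F(H_s); the claims on M(H) and P(H), and
   h_k(M(H)) <= F(H), follow at once, and the restricted sequence inherits
   exactness and the w-splitting maps h_k from the ambient one. *)

Lemma big_partition_fst {V : nmodType} {I T : eqType} (L : seq (I * T))
    (G : I * T -> V) :
  \sum_(p <- L) G p = \sum_(i <- undup (map fst L)) \sum_(p <- L | p.1 == i) G p.
Proof.
under [RHS]eq_bigr => i _ do rewrite big_mkcond.
rewrite exchange_big /=; apply: eq_big_seq => p pL.
have pin : p.1 \in undup (map fst L) by rewrite mem_undup; apply: map_f.
rewrite (bigD1_seq p.1) ?undup_uniq // eqxx big1 /= ?addr0 // => i.
by rewrite eq_sym => /negbTE ->.
Qed.

Section Submodules.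
Variables (R : comPzRingType) (V : lmodType R) (S : V -> Prop).
Hypothesis S_sub : submodP S.

Lemma submodP_sum (T : eqType) (l : seq T) (P : pred T) (G : T -> V) :
  (forall x, x \in l -> P x -> S (G x)) -> S (\sum_(x <- l | P x) G x).
Proof.
have [S0 [SD _]] := S_sub => Sl; rewrite big_seq_cond.
by apply: big_ind => // x /andP [xl Px]; apply: Sl.
Qed.

Lemma submodP_opp x : S x -> S (- x).
Proof. by have [_ [_ SZ]] := S_sub => Sx; rewrite -scaleN1r; apply: SZ. Qed.

Definition additive_on {W : zmodType} (w : V -> W) :=
  forall a b, S a -> S b -> w (a + b) = w a + w b.

Lemma linear_on_additive (U : lmodType R) (w : V -> U) :
  linear_on S w -> additive_on w.
Proof. by move=> wl a b Sa Sb; have := wl 1 a b Sa Sb; rewrite !scale1r. Qed.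

Lemma additive_on0 {W : zmodType} (w : V -> W) : additive_on w -> w 0 = 0.
Proof.
have [S0 _] := S_sub => wD.
by apply: (@addrI _ (w 0)); rewrite -wD // !addr0.
Qed.

Lemma linear_onZ (U : lmodType R) (w : V -> U) a x :
  linear_on S w -> S x -> w (a *: x) = a *: w x.
Proof.
have [S0 _] := S_sub => wl Sx.
by rewrite -[a *: x]addr0 wl // (additive_on0 (linear_on_additive wl)) addr0.
Qed.

Lemma additive_onN {W : zmodType} (w : V -> W) x :
  additive_on w -> S x -> w (- x) = - w x.
Proof.
move=> wD Sx; apply: (@addrI _ (w x)); rewrite -wD ?subrr ?additive_on0 //.
exact: submodP_opp.
Qed.

Lemma additive_on_sum {W : zmodType} (w : V -> W) (T : eqType) (l : seq T)
    (P : pred T) (G : T -> V) :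
  additive_on w -> (forall x, x \in l -> P x -> S (G x)) ->
  w (\sum_(x <- l | P x) G x) = \sum_(x <- l | P x) w (G x).
Proof.
have [S0 [SD _]] := S_sub => wD Sl; rewrite big_seq_cond [RHS]big_seq_cond.
apply: (proj2 (big_ind2 (fun u v => S u /\ w u = v) _ _ _)).
- by split; last exact: additive_on0.
- by move=> u1 v1 u2 v2 [Su1 <-] [Su2 <-]; split; [apply: SD|rewrite wD].
- by move=> x /andP [xl Px]; split; first apply: Sl.
Qed.

End Submodules.

Section DirectSum.
Variables (R : comPzRingType) (F : lmodType R) (I : eqType) (Fi : I -> F -> Prop).
Hypothesis Fi_sub : forall i, submodP (Fi i).

(* A formal sum of components: [(i, x)] stands for the summand x of F_i. *)
Definition dsum_terms (Q : I -> Prop) (L : seq (I * F)) :=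
  forall p, p \in L -> Q p.1 /\ Fi p.1 p.2.

Definition sum_terms (L : seq (I * F)) : F := \sum_(p <- L) p.2.

Lemma dsum_terms_cat Q L1 L2 :
  dsum_terms Q L1 -> dsum_terms Q L2 -> dsum_terms Q (L1 ++ L2).
Proof. by move=> ok1 ok2 p; rewrite mem_cat => /orP [/ok1|/ok2]. Qed.

Lemma dsum_terms_scale Q L a :
  dsum_terms Q L -> dsum_terms Q [seq (p.1, a *: p.2) | p <- L].
Proof.
move=> ok _ /mapP [p pL ->]; have [Qp Fp] := ok p pL.
by split=> //; have [_ [_ FZ]] := Fi_sub p.1; apply: FZ.
Qed.

Lemma dsum_terms_weaken Q Q' L :
  (forall i, Q i -> Q' i) -> dsum_terms Q L -> dsum_terms Q' L.
Proof. by move=> QQ' ok p /ok [/QQ' Qp Fp]. Qed.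

Lemma Fi_sum_index L i :
  dsum_terms (fun=> True) L -> Fi i (\sum_(p <- L | p.1 == i) p.2).
Proof.
by move=> ok; apply: submodP_sum => // p /ok [_ + /eqP <-].
Qed.

Lemma FH_terms Q y :
  FH Fi Q y <-> exists2 L, dsum_terms Q L & y = sum_terms L.
Proof.
split=> [[s [x [sx ->]]]|[L ok ->]].
  exists [seq (i, x i) | i <- s]; last by rewrite /sum_terms big_map.
  by move=> _ /mapP [i /sx ? ->].
exists (undup (map fst L)), (fun i => \sum_(p <- L | p.1 == i) p.2).
split; last by rewrite /sum_terms (big_partition_fst L (fun p => p.2)).
move=> i; rewrite mem_undup => /mapP [q qL ->]; split; first by case: (ok q qL).
by apply: Fi_sum_index; apply: dsum_terms_weaken ok.
Qed.

Lemma FH_component Q i x : Q i -> Fi i x -> FH Fi Q x.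
Proof.
move=> Qi Fx; apply/FH_terms; exists [:: (i, x)]; last by rewrite /sum_terms big_seq1.
by move=> p; rewrite inE => /eqP ->.
Qed.

Lemma FH_subset (Q Q' : I -> Prop) y :
  (forall i, Q i -> Q' i) -> FH Fi Q y -> FH Fi Q' y.
Proof. by move=> QQ' [s [x [sx ->]]]; exists s, x; split=> // i /sx [/QQ']. Qed.

Lemma submodP_FH Q : submodP (FH Fi Q).
Proof.
split; [|split].
- by apply/FH_terms; exists [::]; rewrite /sum_terms ?big_nil.
- move=> _ _ /FH_terms [L1 ok1 ->] /FH_terms [L2 ok2 ->].
  apply/FH_terms; exists (L1 ++ L2); first exact: dsum_terms_cat.
  by rewrite /sum_terms big_cat.
- move=> a _ /FH_terms [L ok ->]; apply/FH_terms.
  exists [seq (p.1, a *: p.2) | p <- L]; first exact: dsum_terms_scale.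
  by rewrite /sum_terms big_map scaler_sumr.
Qed.

Section Independent.
Hypothesis Fi_indep : forall (s : seq I) (x : I -> F), uniq s ->
  (forall i, i \in s -> Fi i (x i)) -> \sum_(i <- s) x i = 0 ->
  forall i, i \in s -> x i = 0.

Lemma dsum_terms_eq0 (A : zmodType) (w : I -> F -> A) L :
  (forall i, additive_on (Fi i) (w i)) ->
  dsum_terms (fun=> True) L -> sum_terms L = 0 -> \sum_(p <- L) w p.1 p.2 = 0.
Proof.
move=> w_add ok L0; pose c i := \sum_(p <- L | p.1 == i) p.2.
have c0 : forall i, i \in undup (map fst L) -> c i = 0.
  apply: (Fi_indep (undup_uniq _) (x := c)) => [j _|]; first exact: Fi_sum_index.
  by rewrite -(big_partition_fst L (fun p => p.2)).
rewrite (big_partition_fst L (fun p => w p.1 p.2)) big1_seq // => i /andP [_ iL].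
transitivity (w i (c i)); last by rewrite (c0 _ iL) (additive_on0 (Fi_sub i) (w_add i)).
rewrite (additive_on_sum (Fi_sub i) (w_add i)); last by move=> p /ok [_ + /eqP <-].
by apply: eq_bigr => p /eqP ->.
Qed.

Lemma dsum_terms_eq (A : zmodType) (w : I -> F -> A) L1 L2 :
  (forall i, additive_on (Fi i) (w i)) ->
  dsum_terms (fun=> True) L1 -> dsum_terms (fun=> True) L2 ->
  sum_terms L1 = sum_terms L2 ->
  \sum_(p <- L1) w p.1 p.2 = \sum_(p <- L2) w p.1 p.2.
Proof.
move=> w_add ok1 ok2 e.
have ok2N : dsum_terms (fun=> True) [seq (p.1, - p.2) | p <- L2].
  move=> _ /mapP [p pL ->]; have [_ Fp] := ok2 p pL.
  by split=> //; apply: submodP_opp.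
have sum0 : sum_terms (L1 ++ [seq (p.1, - p.2) | p <- L2]) = 0.
  rewrite /sum_terms big_cat /= big_map sumrN.
  by rewrite -/(sum_terms L1) -/(sum_terms L2) e subrr.
have sumN : \sum_(p <- L2) w p.1 (- p.2) = - \sum_(p <- L2) w p.1 p.2.
  rewrite -sumrN; apply: eq_big_seq => p pL; have [_ Fp] := ok2 p pL.
  by rewrite (additive_onN (Fi_sub p.1) (w_add p.1) Fp).
move: (dsum_terms_eq0 w_add (dsum_terms_cat ok1 ok2N) sum0).
by rewrite big_cat big_map /= sumN => /eqP; rewrite subr_eq0 => /eqP.
Qed.

Lemma dsum_extension (A : lmodType R) (v : I -> F -> A) Q :
  (forall i, linear_on (Fi i) (v i)) ->
  exists2 V : F -> A, linear_on (FH Fi Q) V &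
    forall L, dsum_terms Q L -> V (sum_terms L) = \sum_(q <- L) v q.1 q.2.
Proof.
move=> v_lin; have v_add i := linear_on_additive (v_lin i).
have [rep rep_spec] : exists rep : F -> seq (I * F), forall y,
    FH Fi Q y -> dsum_terms Q (rep y) /\ y = sum_terms (rep y).
  apply: (ClassicalEpsilon.choice
    (fun y L => FH Fi Q y -> dsum_terms Q L /\ y = sum_terms L)) => y.
  have [/FH_terms [L ok e]|nFH] := Classical_Prop.classic (FH Fi Q y).
    by exists L.
  by exists [::] => /nFH.
pose V y := \sum_(q <- rep y) v q.1 q.2.
have VE L : dsum_terms Q L -> V (sum_terms L) = \sum_(q <- L) v q.1 q.2.
  move=> ok; have /rep_spec [ok' e] : FH Fi Q (sum_terms L) by apply/FH_terms; exists L.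
  by apply: (dsum_terms_eq v_add);
    [exact: dsum_terms_weaken ok'|exact: dsum_terms_weaken ok|].
exists V => // a _ _ /FH_terms [Lx okx ->] /FH_terms [Ly oky ->].
have -> : a *: sum_terms Lx + sum_terms Ly =
    sum_terms ([seq (q.1, a *: q.2) | q <- Lx] ++ Ly).
  by rewrite /sum_terms big_cat big_map scaler_sumr.
rewrite (VE _ (dsum_terms_cat (dsum_terms_scale (a := a) okx) oky)) (VE _ okx) (VE _ oky).
rewrite big_cat big_map scaler_sumr /=; congr (_ + _); apply: eq_big_seq => q qL.
by have [_ Fq] := okx q qL; rewrite (linear_onZ (Fi_sub q.1) a (v_lin q.1) Fq).
Qed.

Hypothesis Fi_proj : forall i, projective_sub (Fi i).

Lemma projective_FH Q : projective_sub (FH Fi Q).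
Proof.
split; first exact: submodP_FH.
move=> A B p u p_surj u_lin.
have lift i : exists v : F -> A,
    linear_on (Fi i) v /\ (Q i -> forall x, Fi i x -> p (v x) = u x).
  have [Qi|nQi] := Classical_Prop.classic (Q i); last first.
    by exists (fun=> 0); split=> // a x y _ _; rewrite scaler0 addr0.
  have [v [v_lin pv]] := (Fi_proj i).2 A B p u p_surj
    (fun a x y Fx Fy => u_lin a x y (FH_component Qi Fx) (FH_component Qi Fy)).
  by exists v.
have [v v_spec] := ClassicalEpsilon.choice _ lift.
have [V V_lin VE] := dsum_extension Q (fun i => (v_spec i).1).
exists V; split=> // _ /FH_terms [L ok ->].
rewrite VE // raddf_sum /sum_terms.
rewrite (additive_on_sum (submodP_FH Q) (linear_on_additive u_lin)).
  by apply: eq_big_seq => q /ok [Qq Fq]; exact: (v_spec q.1).2 Qq _ Fq.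
by move=> q /ok [Qq Fq] _; apply: FH_component Qq Fq.
Qed.

End Independent.
End DirectSum.

Definition union_of (I : Type) (S1 : (I -> Prop) -> Prop) (i : I) : Prop :=
  exists Hs, S1 Hs /\ Hs i.

Section ChainUnion.
Variables (R : comPzRingType) (P F M : lmodType R) (f : P -> F) (g : F -> M).
Variables (I : eqType) (Fi : I -> F -> Prop) (S1 : (I -> Prop) -> Prop).
Hypothesis S1_nonempty : exists Hs, S1 Hs.
Hypothesis S1_chain : forall A B, S1 A -> S1 B ->
  (forall i, A i -> B i) \/ (forall i, B i -> A i).

Lemma chain_cover (s : seq I) : (forall i, i \in s -> union_of S1 i) ->
  exists Hs, S1 Hs /\ forall i, i \in s -> Hs i.
Proof.
elim: s => [|a s IH] sH; first by have [H0 S0] := S1_nonempty; exists H0.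
have [Hs [S1s Hss]] : exists Hs, S1 Hs /\ forall i, i \in s -> Hs i.
  by apply: IH => i iS; apply: sH; rewrite inE iS orbT.
have [Ha [S1a Haa]] := sH a (mem_head _ _).
have [sub|sub] := S1_chain S1s S1a.
  by exists Ha; split=> // i; rewrite inE => /orP [/eqP -> //|/Hss /sub].
by exists Hs; split=> // i; rewrite inE => /orP [/eqP -> |/Hss //]; apply: sub.
Qed.

Lemma FH_chain_union y :
  (exists Hs, S1 Hs /\ FH Fi Hs y) <-> FH Fi (union_of S1) y.
Proof.
split=> [[Hs [S1s]]|[s [x [sx ->]]]].
  by apply: FH_subset => i Hi; exists Hs.
have [Hs [S1s Hss]] := chain_cover (fun i iS => (sx i iS).1).
exists Hs; split=> //; exists s, x; split=> // i iS.
by split; [apply: Hss|apply: (sx i iS).2].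
Qed.

Lemma MH_chain_union z :
  (exists Hs, S1 Hs /\ MH Fi g Hs z) <-> MH Fi g (union_of S1) z.
Proof.
split=> [[Hs [S1s [y [Fy <-]]]]|[y [/FH_chain_union [Hs [S1s Fy]] <-]]].
  by exists y; split=> //; apply/FH_chain_union; exists Hs.
by exists Hs; split=> //; exists y.
Qed.

Lemma PH_chain_union x :
  (exists Hs, S1 Hs /\ PH Fi f g Hs x) <-> PH Fi f g (union_of S1) x.
Proof.
split=> [[Hs [S1s [Fx gx]]]|[/FH_chain_union [Hs [S1s Fx]] gx]].
  by split=> //; apply/FH_chain_union; exists Hs.
by exists Hs.
Qed.

End ChainUnion.

Lemma linear_on_linear (R : comPzRingType) (V W : lmodType R) (S : V -> Prop)
    (u : {linear V -> W}) : linear_on S u.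
Proof. by move=> a x y _ _; rewrite linearP. Qed.

Section Restriction.
Variables (R : comPzRingType) (P F M : lmodType R).
Variables (f : {linear P -> F}) (g : {linear F -> M}).
Variables (I : eqType) (Fi : I -> F -> Prop) (H : I -> Prop).
Hypothesis Fi_sub : forall i, submodP (Fi i).

Lemma submodP_MH : submodP (MH Fi g H).
Proof.
have [FH0 [FHD FHZ]] := submodP_FH Fi_sub H.
split; [|split].
- by exists 0; rewrite raddf0.
- move=> _ _ [x [Fx <-]] [y [Fy <-]].
  by exists (x + y); split; [apply: FHD|rewrite raddfD].
- by move=> a _ [x [Fx <-]]; exists (a *: x); split; [apply: FHZ|rewrite linearZ].
Qed.

Lemma submodP_PH : submodP (PH Fi f g H).
Proof.
have [FH0 [FHD FHZ]] := submodP_FH Fi_sub H.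
split; [|split].
- by rewrite /PH !raddf0.
- move=> x y [Fx gx] [Fy gy].
  by split; rewrite !linearD ?gx ?gy ?addr0 //; apply: FHD.
- by move=> a x [Fx gx]; split; rewrite !linearZ_LR ?gx ?scaler0 //; apply: FHZ.
Qed.

Lemma ses_restrict :
  ses_sub (fun=> True) (fun=> True) (fun=> True) f g ->
  ses_sub (PH Fi f g H) (FH Fi H) (MH Fi g H) f g.
Proof.
case=> _ [_ [_ [f_inj [_ g_exact]]]].
split; first by split; [exact: submodP_PH|split; [exact: submodP_FH|exact: submodP_MH]].
split; first by split; apply: linear_on_linear.
split; first by split=> [x []|y Fy]; last by exists y.
split; first by move=> x x' _ _; apply: f_inj.
split; first by move=> z [y [Fy <-]]; exists y.
move=> y Fy; split=> [gy|[x [[_ gx] <-]] //].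
by have [x [_ fx]] := (g_exact y Logic.I).1 gy; exists x; rewrite /PH fx.
Qed.

Lemma wsplit_restrict n (d : 'I_n -> R) (h : 'I_n -> {linear M -> F}) :
  wsplit_with (fun=> True) (fun=> True) (fun=> True) f g d (fun k => h k) ->
  (forall k z, MH Fi g H z -> FH Fi H (h k z)) ->
  wsplit_with (PH Fi f g H) (FH Fi H) (MH Fi g H) f g d (fun k => h k).
Proof.
case=> ses GV hk hH; split=> [|//|k]; first exact: ses_restrict.
have [_ _ ghk] := hk k.
by split=> [|z|z _]; [apply: linear_on_linear|apply: hH|apply: ghk].
Qed.

End Restriction.

Theorem lemma3p1 (R : comPzRingType) (P F M : lmodType R)
    (f : {linear P -> F}) (g : {linear F -> M})
    (n : nat) (d : 'I_n -> R) (h : 'I_n -> {linear M -> F})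
    (I : eqType) (Fi : I -> F -> Prop)
    (S1 : (I -> Prop) -> Prop) :
  wsplit_with (fun _ => True) (fun _ => True) (fun _ => True)
    f g d (fun k => h k) ->
  internal_dsum Fi ->
  (forall i, projective_sub (Fi i)) ->
  (exists Hs, S1 Hs) ->
  (forall A B, S1 A -> S1 B -> (forall i, A i -> B i) \/ (forall i, B i -> A i)) ->
  (forall Hs, S1 Hs -> forall k z, MH Fi g Hs z -> FH Fi Hs (h k z)) ->
  let H := fun i => exists Hs, S1 Hs /\ Hs i in
  ((forall y, (exists Hs, S1 Hs /\ FH Fi Hs y) <-> FH Fi H y) /\
   projective_sub (FH Fi H) /\
   (forall p, (exists Hs, S1 Hs /\ PH Fi f g Hs p) <-> PH Fi f g H p) /\
   (forall z, (exists Hs, S1 Hs /\ MH Fi g Hs z) <-> MH Fi g H z)) /\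
  ((forall k z, MH Fi g H z -> FH Fi H (h k z)) /\
   wsplit_with (PH Fi f g H) (FH Fi H) (MH Fi g H) f g d (fun k => h k)).
Proof.
move=> wsplit [_ [_ Fi_indep]] Fi_proj S1_nonempty S1_chain hS H.
have Fi_sub i : submodP (Fi i) by case: (Fi_proj i).
have FH_union := FH_chain_union Fi S1_nonempty S1_chain.
have MH_union := MH_chain_union g Fi S1_nonempty S1_chain.
have hH k z : MH Fi g H z -> FH Fi H (h k z).
  move=> /MH_union [Hs [S1s Mz]].
  by apply/FH_union; exists Hs; split; last exact: hS.
split; last by split; [exact: hH|exact: wsplit_restrict].
split; first exact: FH_union.
split; first exact: projective_FH.
by split; [exact: PH_chain_union|exact: MH_union].
Qed.
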